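(* Let $k\ge 2$ and let $n_1,\dots,n_k\ge 3$ be integers. For $G=P_{n_1}\Box P_{n_2}\Box\cdots\Box P_{n_k}$, $$rx_3(G)=\sum_{i=1}^k n_i-k.$$
   Context: $P_n$ denotes the path on $n$ vertices. An edge coloring may give adjacent edges the same color; a tree is rainbow if its edges have pairwise distinct colors. For a connected graph $G$ on at least $3$ vertices, $rx_3(G)$ is the minimum number of colors in an edge coloring such that every set of $3$ vertices lies in some rainbow tree. The Cartesian product $G\Box H$ has vertex set $V(G)\times V(H)$, with $(g_1,h_1)\sim(g_2,h_2)$ iff ($g_1=g_2$ and $h_1h_2\in E(H)$) or ($h_1=h_2$ and $g_1g_2\in E(G)$). *)

From HB Require Import structures.
From mathcomp Require Import all_boot.
Set Implicit Arguments. Unset Strict Implicit. Unset Printing Implicit Defensive.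

(* A simple graph is a symmetric irreflexive relation e on a finite type T.
   Edges are represented as 2-element vertex sets [set u; v] with e u v. *)
Section Graphs.
Variables (T : finType) (e : rel T).

Definition is_edge (E : {set T}) : bool :=
  [exists u, exists v, e u v && (E == [set u; v])].

Definition span_vertices (F : {set {set T}}) : {set T} := \bigcup_(E in F) E.

Definition is_tree (F : {set {set T}}) : bool :=
  [forall E in F, is_edge E] &&
  [forall x in span_vertices F, forall y in span_vertices F,
     connect (fun a b => [set a; b] \in F) x y] &&
  (#|F| == #|span_vertices F| - 1).

(* an edge colouring with (at most) m colours: colour of edge {u,v} is c [set u; v] *)
Definition rainbow (m : nat) (c : {set T} -> 'I_m) (F : {set {set T}}) : bool :=
  [forall E in F, forall E' in F, (c E == c E') ==> (E == E')].

Definition three_rainbow_coloring (m : nat) (c : {set T} -> 'I_m) : Prop :=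
  forall S : {set T}, #|S| = 3 ->
    exists F : {set {set T}}, [/\ is_tree F, rainbow c F & S \subset span_vertices F].

Definition rx3_eq (r : nat) : Prop :=
  (exists c : {set T} -> 'I_r, three_rainbow_coloring c) /\
  (forall m (c : {set T} -> 'I_m), three_rainbow_coloring c -> r <= m).
End Graphs.

(* P_{n_0} □ ... □ P_{n_(k-1)}: vertices are tuples (x_i) with x_i < n_i;
   adjacent iff they differ by 1 in exactly one coordinate and agree elsewhere. *)
Definition grid_vertex (k : nat) (n : 'I_k -> nat) : finType :=
  {dffun forall i : 'I_k, 'I_(n i)}.

Definition grid_adj (k : nat) (n : 'I_k -> nat) : rel (grid_vertex n) :=
  fun u v => [exists i : 'I_k,
     (((u i : nat).+1 == v i) || ((v i : nat).+1 == u i)) &&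
     [forall j : 'I_k, (j != i) ==> (u j == v j)]].

From mathcomp Require Import all_boot zify.
Set Implicit Arguments. Unset Strict Implicit. Unset Printing Implicit Defensive.

(* An edge in direction i whose endpoints have i-th coordinates a
   and a + 1 gets the colour (i, a); there are D such pairs.  Given three
   vertices, let m be their coordinatewise median and route every vertex to m by
   repeatedly moving its first coordinate that differs from m one step towards m.
   The routes from the three vertices form a tree (section ParentTree: the edges
   {v, p v} of a parent map p whose rank decreases towards a root), and this tree
   is rainbow: two route edges of colour (i, a) leave vertices that agree with m
   before coordinate i and lie on the same side of m in coordinate i, so by the
   median property they come from the same source, with which they agree after i.

   The coordinate sum changes by exactly one along every edge, so a
   tree through the corners (0, ..., 0) and (n_1 - 1, ..., n_k - 1) contains an
   edge between any two consecutive levels: at least D edges, of distinct colours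
   if the tree is rainbow. *)

Section ParentTree.
Variables (T : finType) (e : rel T) (p : T -> T) (r : T) (h : T -> nat).
Hypothesis p_edge : forall v, v != r -> e v (p v).
Hypothesis p_rank : forall v, v != r -> h (p v) < h v.

Lemma parent_ind (Q : T -> Prop) :
  Q r -> (forall v, v != r -> Q (p v) -> Q v) -> forall v, Q v.
Proof.
move=> Qr Qp v; have [N] := ubnP (h v); elim: N v => // N IH v hv.
case: (eqVneq v r) => [-> //|vr]; apply: (Qp _ vr (IH _ _)).
by have := p_rank vr; lia.
Qed.

Variable S : {set T}.

Definition ancestors : {set T} := [set v | [exists s in S, fconnect p s v]].

Definition parent_edges : {set {set T}} :=
  [set [set v; p v] | v in ancestors :\ r].

Let tree_rel : rel T := fun a b => [set a; b] \in parent_edges.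

Lemma ancestors_parent v : v \in ancestors -> p v \in ancestors.
Proof.
rewrite !inE => /exists_inP[s sS sv]; apply/exists_inP; exists s => //.
exact: connect_trans sv (fconnect1 p v).
Qed.

Lemma sub_ancestors : S \subset ancestors.
Proof. by apply/subsetP=> s sS; rewrite inE; apply/exists_inP; exists s. Qed.

Lemma parent_edge_in v : v \in ancestors -> v != r -> [set v; p v] \in parent_edges.
Proof. by move=> vA vr; apply/imsetP; exists v; rewrite // in_setD1 vr. Qed.

Lemma connect_root v : v \in ancestors -> connect tree_rel v r.
Proof.
elim/parent_ind: v => [_|v vr IH vA]; first exact: connect0.
apply: connect_trans (connect1 _) (IH (ancestors_parent vA)).
exact: parent_edge_in.
Qed.

Hypothesis S_not_root : exists2 s, s \in S & s != r.

(* Some point of S differs from the root, whose route then contains r. *)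
Lemma root_ancestor : r \in ancestors.
Proof.
case: S_not_root => s sS _; rewrite inE; apply/exists_inP; exists s => //.
by elim/parent_ind: s {sS} => [|v _]; [exact: connect0 | apply: connect_trans (fconnect1 p v)].
Qed.

(* The root is reached by the last edge of the route from any other ancestor. *)
Lemma root_spanned : r \in span_vertices parent_edges.
Proof.
case: S_not_root => s sS; have: s \in ancestors by rewrite (subsetP sub_ancestors).
elim/parent_ind: s {sS} => [_|v vr IH vA _]; first by rewrite eqxx.
case: (eqVneq (p v) r) => [pvr|pvr]; last exact: IH (ancestors_parent vA) pvr.
by apply/bigcupP; exists [set v; p v]; [exact: parent_edge_in | rewrite pvr set22].
Qed.

Lemma span_parent_edges : span_vertices parent_edges = ancestors.
Proof.
apply/setP=> x; apply/bigcupP/idP => [[E /imsetP[v] vA -> {E}]|xA].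
  move: vA; rewrite in_setD1 in_set2 => /andP[_ vA] /orP[] /eqP-> //.
  exact: ancestors_parent.
case: (eqVneq x r) => [->|xr]; first by apply/bigcupP; exact: root_spanned.
by exists [set x; p x]; rewrite ?set21 ?parent_edge_in.
Qed.

(* Distinct non-root ancestors give distinct edges, since p strictly lowers h. *)
Lemma card_parent_edges : #|parent_edges| = #|ancestors| - 1.
Proof.
rewrite card_in_imset; first by rewrite (cardsD1 r ancestors) root_ancestor; lia.
move=> v w; rewrite !in_setD1 => /andP[vr _] /andP[wr _] Evw.
have: v \in [set w; p w] by rewrite -Evw set21.
have: w \in [set v; p v] by rewrite Evw set21.
rewrite !inE => /orP[/eqP-> //|/eqP wv] /orP[/eqP //|/eqP vw].
by have := p_rank vr; have := p_rank wr; rewrite -wv -vw; lia.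
Qed.

Lemma parent_edges_tree : is_tree e parent_edges.
Proof.
apply/andP; split; first (apply/andP; split).
- apply/forall_inP=> E /imsetP[v]; rewrite in_setD1 => /andP[vr _] ->.
  apply/existsP; exists v; apply/existsP; exists (p v); by rewrite p_edge ?eqxx.
- rewrite span_parent_edges; apply/forall_inP=> x xA; apply/forall_inP=> y yA.
  apply: connect_trans (connect_root xA) _.
  by rewrite sym_connect_sym ?connect_root // => a b; rewrite /tree_rel setUC.
- by rewrite card_parent_edges span_parent_edges.
Qed.

End ParentTree.

Definition step_toward N (x y : 'I_N) : 'I_N :=
  insubd x (if x < y then x.+1 else x.-1).

Lemma val_step_toward N (x y : 'I_N) : x != y ->
  val (step_toward x y) = if x < y then x.+1 else x.-1.
Proof.
move=> xy; rewrite /step_toward val_insubd.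
have := ltn_ord x; have := ltn_ord y; move: xy; rewrite -val_eqE /=.
by case: (ltnP x y) => xy nxy hy hx; case: ifP => //; lia.
Qed.

Section Route.
Variables (k : nat) (n : 'I_k -> nat).
Notation V := (grid_vertex n).
Variable m : V.

Definition first_diff (v : V) (j : 'I_k) : bool :=
  (v j != m j) && [forall j' : 'I_k, (j' < j) ==> (v j' == m j')].

Definition toward (v : V) : V :=
  [ffun j => if first_diff v j then step_toward (v j) (m j) else v j].

Lemma first_diff_uniq v i j : first_diff v i -> first_diff v j -> i = j.
Proof.
move=> /andP[vi /forall_inP Hi] /andP[vj /forall_inP Hj]; apply: val_inj => /=.
case: (ltngtP i j) => // ij; first by move: vi; rewrite (eqP (Hj i ij)) eqxx.
by move: vj; rewrite (eqP (Hi j ij)) eqxx.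
Qed.

Lemma first_diff_exists v : v != m -> exists i, first_diff v i.
Proof.
move=> vm; have [j0 vj0] : exists j, v j != m j.
  apply/existsP; apply: contra vm => /forallP vm; apply/eqP/ffunP=> j.
  by apply/eqP; have := vm j; rewrite ?negbK.
have [i vi iP] := @arg_minnP _ j0 (fun j => v j != m j) (fun j : 'I_k => val j) vj0.
exists i; rewrite /first_diff vi; apply/forall_inP=> j ji.
by apply: contraLR ji => vj; rewrite -leqNgt iP.
Qed.

Lemma toward_other v j : ~~ first_diff v j -> toward v j = v j.
Proof. by move=> vj; rewrite ffunE (negbTE vj). Qed.

Lemma toward_first v i : first_diff v i ->
  nat_of_ord (toward v i) = if v i < m i then (v i).+1 else (v i).-1.
Proof. by move=> vi; rewrite ffunE vi val_step_toward //; case/andP: vi. Qed.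

Lemma toward_target : toward m = m.
Proof. by apply/ffunP=> j; rewrite toward_other // /first_diff eqxx. Qed.

Lemma toward_fixed v i j : first_diff v i -> j != i -> toward v j = v j.
Proof.
move=> vi ji; rewrite toward_other //.
by apply: contra ji => vj; rewrite (first_diff_uniq vj vi).
Qed.

Lemma toward_adj v : v != m -> grid_adj v (toward v).
Proof.
case/first_diff_exists=> i vi; apply/existsP; exists i; apply/andP; split.
  have := toward_first vi; case/andP: vi; rewrite -val_eqE /= => ne _.
  by case: ltnP => ? ->; apply/orP; [left|right]; apply/eqP; lia.
by apply/forall_inP=> j ji; rewrite (toward_fixed vi ji).
Qed.

Definition grid_dist (v : V) : nat := \sum_(j < k) ((v j - m j) + (m j - v j)).

Lemma toward_dist v : v != m -> grid_dist (toward v) < grid_dist v.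
Proof.
case/first_diff_exists=> i vi; rewrite /grid_dist (bigD1 i) //= [X in _ < X](bigD1 i) //=.
under eq_bigr => j ji do rewrite (toward_fixed vi ji).
have := toward_first vi; case/andP: vi; rewrite -val_eqE /= => ne _.
by case: ltnP => ? ->; lia.
Qed.

(* v lies on the route from s to m: every coordinate of v is between those of
   s and m, and after the first coordinate where v differs from m it agrees with s. *)
Definition on_route (s v : V) : Prop :=
  (forall j, (m j <= v j <= s j) || (s j <= v j <= m j)) /\
  (forall j j' : 'I_k, j < j' -> v j != m j -> v j' = s j').

Lemma on_route_step s v : on_route s v -> on_route s (toward v).
Proof.
case: (eqVneq v m) => [->|vm]; first by rewrite toward_target.
case/first_diff_exists: (vm) => i vi [between after]; split.
  move=> j; case: (eqVneq j i) => [->|ji]; last by rewrite (toward_fixed vi ji).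
  have := between i; have := toward_first vi; case/andP: vi; rewrite -val_eqE /= => ne _.
  by case: ltnP => ? ->; lia.
move=> j j' jj' tj; have j'i : j' != i.
  apply: contraNneq tj => j'i; subst j'.
  have ji : j != i by rewrite -val_eqE neq_ltn jj'.
  by case/andP: (vi) => _ /forall_inP/(_ j jj') vj; rewrite (toward_fixed vi ji).
rewrite (toward_fixed vi j'i); case: (eqVneq j i) => [ji|ji].
  by subst j; apply: after jj' _; case/andP: vi.
by apply: after jj' _; rewrite -(toward_fixed vi ji).
Qed.

Lemma on_route_reach s v : fconnect toward s v -> on_route s v.
Proof.
move/iter_findex=> <-; elim: (findex _ _ _) => [|t IH] /=; last exact: on_route_step.
by split=> [j|//]; lia.
Qed.

End Route.

Definition median_of k (n : 'I_k -> nat) (S : {set grid_vertex n}) (m : grid_vertex n) :=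
  forall i (s s' : grid_vertex n), s \in S -> s' \in S ->
    (s i < m i) && (s' i < m i) || (m i < s i) && (m i < s' i) -> s = s'.

Lemma card3_set (T : finType) (S : {set T}) : #|S| = 3 -> exists a b c, S = [set a; b; c].
Proof.
move=> S3; have /card_gt2P[a [b [c [[aS bS cS] [ab bc ca]]]]] : 2 < #|S| by rewrite S3.
exists a, b, c; apply/eqP; rewrite eq_sym eqEcard; apply/andP; split.
  by apply/subsetP=> x; rewrite !inE => /orP[/orP[]|] /eqP->.
by rewrite S3 setUC cardsU1 cards2 !inE ab (negbTE ca) eq_sym (negbTE bc).
Qed.

Definition med3 N (x y z : 'I_N) : 'I_N :=
  if (y <= x <= z) || (z <= x <= y) then x
  else if (x <= y <= z) || (z <= y <= x) then y else z.

Lemma med3P N (x y z : 'I_N) :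
  ((x < med3 x y z) + (y < med3 x y z) + (z < med3 x y z) <= 1) &&
  ((med3 x y z < x) + (med3 x y z < y) + (med3 x y z < z) <= 1).
Proof. by rewrite /med3; case: ifP => h1; [|case: ifP => h2]; apply/andP; split; lia. Qed.

Lemma median_of3 k (n : 'I_k -> nat) (a b c : grid_vertex n) :
  median_of [set a; b; c] [ffun i => med3 (a i) (b i) (c i)].
Proof.
move=> i s s'; rewrite !inE ffunE.
by move=> /orP[/orP[]|] /eqP-> /orP[/orP[]|] /eqP-> //; have := med3P (a i) (b i) (c i); lia.
Qed.

Section RouteTree.
Variables (k : nat) (n : 'I_k -> nat) (m : grid_vertex n) (S : {set grid_vertex n}).
Hypothesis m_median : median_of S m.

(* A non-target vertex u of the route tree is determined by its first differing
   coordinate i and the lower end min(u i, toward u i) of the edge it moves along: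
   the side of m it lies on singles out its source s in S, the coordinates
   before i are those of m and those after i are those of s. *)
Lemma route_edge_determined u u' i :
  u \in ancestors (toward m) S -> u' \in ancestors (toward m) S ->
  first_diff m u i -> first_diff m u' i ->
  minn (toward m u i) (u i) = minn (toward m u' i) (u' i) -> u = u'.
Proof.
rewrite !inE => /exists_inP[s sS /on_route_reach[bt af]].
move=> /exists_inP[s' sS' /on_route_reach[bt' af']] ui u'i.
rewrite (toward_first ui) (toward_first u'i) => min_eq.
have ne : (u i : nat) != m i by rewrite val_eqE; case/andP: ui.
have ne' : (u' i : nat) != m i by rewrite val_eqE; case/andP: u'i.
have := bt i; have := bt' i => b' b.
have same_i : (u i : nat) = u' i by move: min_eq; do 2 case: ltnP => ?; lia.
have ss' : s = s' by apply: (m_median (i := i)) => //; apply/orP; lia.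
subst s'; apply/ffunP=> j; apply: val_inj => /=.
case: (ltngtP j i) => ji; last by have -> : j = i by apply: val_inj.
- case/andP: ui => _ /forall_inP/(_ j ji)/eqP->.
  by case/andP: u'i => _ /forall_inP/(_ j ji)/eqP->.
- by rewrite (af i j ji) ?(af' i j ji) // -val_eqE.
Qed.

End RouteTree.

Lemma sum_pred k (n : 'I_k -> nat) : (forall i, 0 < n i) ->
  \sum_(i < k) (n i).-1 = \sum_(i < k) n i - k.
Proof.
move=> n_gt0; have -> : \sum_(i < k) n i = \sum_(i < k) ((n i).-1 + 1).
  by apply: eq_bigr => i _; have := n_gt0 i; lia.
by rewrite big_split /= sum1_card card_ord addnK.
Qed.

Section UpperBound.
Variables (k : nat) (n : 'I_k -> nat).
Notation V := (grid_vertex n).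
Notation D := (\sum_(i < k) n i - k).
Hypothesis n_gt0 : forall i, 0 < n i.
Hypothesis D_gt0 : 0 < D.

(* Colours are pairs (i, a) with a < n i - 1: the direction of an edge and the
   lower end of its projection on the i-th path. *)
Notation key := {i : 'I_k & 'I_((n i).-1)}.

Lemma card_key : #|{: key}| = D.
Proof.
rewrite card_tagged sumnE big_map big_enum /= -sum_pred //.
by apply: eq_bigr => i _; rewrite card_ord.
Qed.

Definition edge_key (E : {set V}) (x : key) : bool :=
  [exists v : V, exists w : V, (E == [set v; w]) &&
     ((v (tag x)).+1 == w (tag x)) && (val (tagged x) == v (tag x))].

Definition grid_colour (E : {set V}) : 'I_D :=
  if [pick x | edge_key E x] is Some x then cast_ord card_key (enum_rank x)
  else Ordinal D_gt0.

Lemma edge_key_route (m u : V) x : edge_key [set u; toward m u] x ->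
  first_diff m u (tag x) /\ val (tagged x) = minn (toward m u (tag x)) (u (tag x)).
Proof.
move=> /existsP[v /existsP[w /andP[/andP[/eqP E /eqP vw] /eqP ->]]].
have vE : v \in [set u; toward m u] by rewrite E set21.
have wE : w \in [set u; toward m u] by rewrite E set22.
have fj : first_diff m u (tag x).
  apply/negPn/negP => /toward_other tu; move: vE wE vw; rewrite !inE.
  by do 2 case/orP=> /eqP->; rewrite ?tu; lia.
by split=> //; move: vE wE vw; rewrite !inE; do 2 case/orP=> /eqP->; lia.
Qed.

Lemma route_edge_has_key (m u : V) : u != m -> exists x, edge_key [set u; toward m u] x.
Proof.
case/first_diff_exists=> i ui; have ti := toward_first ui.
have ne : (u i : nat) != m i by rewrite val_eqE; case/andP: ui.
have lo : minn (toward m u i) (u i) < (n i).-1.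
  have := ltn_ord (u i); have := ltn_ord (m i).
  by rewrite ti; case: (ltnP (u i) (m i)) => ?; lia.
exists (Tagged (fun i => 'I_((n i).-1)) (Ordinal lo)); apply/existsP.
move: ti; case: (ltnP (u i) (m i)) => ? ti.
  have up : (u i).+1 == toward m u i by apply/eqP; lia.
  have lo_u : minn (toward m u i) (u i) == u i by apply/eqP; lia.
  by exists u; apply/existsP; exists (toward m u); rewrite eqxx; apply/andP.
have down : (toward m u i).+1 == u i by apply/eqP; lia.
have lo_t : minn (toward m u i) (u i) == toward m u i by apply/eqP; lia.
by exists (toward m u); apply/existsP; exists u; rewrite setUC eqxx; apply/andP.
Qed.

Lemma route_edge_colour (m u : V) : u != m -> exists x,
  [/\ grid_colour [set u; toward m u] = cast_ord card_key (enum_rank x),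
      first_diff m u (tag x) &
      val (tagged x) = minn (toward m u (tag x)) (u (tag x))].
Proof.
move=> um; rewrite /grid_colour; case: pickP => [x /edge_key_route[] *|none].
  by exists x.
by have [x] := route_edge_has_key um; rewrite none.
Qed.

Lemma grid_colour_3rainbow : three_rainbow_coloring (@grid_adj k n) grid_colour.
Proof.
move=> S S3; have [a [b [c SE]]] := card3_set S3.
pose m : V := [ffun i => med3 (a i) (b i) (c i)].
have m_med : median_of S m by rewrite SE; exact: median_of3.
have [s sS sm] : exists2 s, s \in S & s != m.
  have : 0 < #|S :\ m| by move: S3; rewrite (cardsD1 m S); case: (m \in S) => /=; lia.
  by case/card_gt0P=> s; rewrite in_setD1 => /andP[sm sS]; exists s.
have p_rank := @toward_dist _ _ m.
exists (parent_edges (toward m) m S); split.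
- exact: (parent_edges_tree (toward_adj (m := m)) p_rank (ex_intro2 _ _ s sS sm)).
- apply/forall_inP=> _ /imsetP[u + ->]; rewrite in_setD1 => /andP[um uA].
  apply/forall_inP=> _ /imsetP[u' + ->]; rewrite in_setD1 => /andP[u'm u'A].
  have [x [-> ux xu]] := route_edge_colour um.
  have [x' [-> u'x' x'u']] := route_edge_colour u'm.
  apply/implyP=> /eqP /cast_ord_inj /enum_rank_inj xx'; subst x'.
  by rewrite (route_edge_determined m_med uA u'A ux u'x') // -xu -x'u'.
- by rewrite (span_parent_edges p_rank (ex_intro2 _ _ s sS sm)) sub_ancestors.
Qed.

End UpperBound.

Section Crossing.
Variables (T : finType) (R : rel T) (f : T -> nat).
Hypothesis R_step : forall a b, R a b -> f b = (f a).+1 \/ f a = (f b).+1.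

Lemma walk_crosses x y t : connect R x y -> f x <= t < f y ->
  exists a b, [/\ R a b, f a = t & f b = t.+1].
Proof.
move/connectP=> [q walk ->] {y}; elim: q x walk => [|z q IH] x /=; first lia.
case/andP=> xz walk ht; case: (leqP (f z) t) => zt; first by apply: IH; lia.
by exists x, z; split => //; have := R_step xz; lia.
Qed.
End Crossing.

Section Levels.
Variables (T : finType) (e : rel T) (f : T -> nat).
Hypothesis f_step : forall u v, e u v -> f v = (f u).+1 \/ f u = (f v).+1.

Lemma edge_step (F : {set {set T}}) a b : [forall E in F, is_edge e E] ->
  [set a; b] \in F -> f b = (f a).+1 \/ f a = (f b).+1.
Proof.
move=> /forall_inP edgesF /edgesF /existsP[u /existsP[v /andP[uv /eqP Eab]]].
have: a \in [set u; v] by rewrite -Eab set21.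
have: b \in [set u; v] by rewrite -Eab set22.
have: u \in [set a; b] by rewrite Eab set21.
have: v \in [set a; b] by rewrite Eab set22.
have fuv := f_step uv; rewrite !inE.
by do 4 case/orP=> /eqP ?; subst; lia.
Qed.

(* An edge set connecting x to y contains an edge between every two consecutive
   levels from f x to f y, so it has at least f y - f x edges. *)
Lemma connecting_edges (F : {set {set T}}) x y : [forall E in F, is_edge e E] ->
  connect (fun a b => [set a; b] \in F) x y -> f y - f x <= #|F|.
Proof.
move=> edgesF xy; pose level (E : {set T}) := (\max_(v in E) f v).-1.
suff levels : {subset iota (f x) (f y - f x) <= [seq level E | E <- enum F]}.
  by have := uniq_leq_size (iota_uniq _ _) levels; rewrite size_iota size_map -cardE.
move=> t; rewrite mem_iota => /andP[xt ty].
have f_step_F a b : [set a; b] \in F -> f b = (f a).+1 \/ f a = (f b).+1.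
  exact: edge_step.
have [a [b [ab fa fb]]] : exists a b, [/\ [set a; b] \in F, f a = t & f b = t.+1].
  by apply: (walk_crosses (R := fun a b => [set a; b] \in F) f_step_F xy); lia.
have a_b : a \notin [set b] by rewrite inE; apply/eqP=> ab'; move: fb; rewrite -ab' fa; lia.
have -> : t = level [set a; b] by rewrite /level big_setU1 //= big_set1 fa fb; lia.
by apply: map_f; rewrite mem_enum.
Qed.
End Levels.

Lemma rainbow_card (T : finType) m (c : {set T} -> 'I_m) (F : {set {set T}}) :
  rainbow c F -> #|F| <= m.
Proof.
move=> /forall_inP rainF; rewrite -(card_in_imset (f := c)); last first.
  move=> E E' EF E'F cE; apply/eqP.
  by move: (rainF E EF) => /forall_inP/(_ E' E'F); rewrite cE eqxx.
by apply: leq_trans (max_card _) _; rewrite card_ord.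
Qed.

Lemma three_set_with (T : finType) (x y : T) : x != y -> 2 < #|T| ->
  exists S : {set T}, [/\ #|S| = 3, x \in S & y \in S].
Proof.
move=> xy T3; have : 0 < #|~: [set x; y]| by have := cardsC [set x; y]; rewrite cards2 xy; lia.
case/card_gt0P=> w; rewrite !inE negb_or => /andP[wx wy].
exists [set x; y; w]; rewrite !inE !eqxx ?orbT; split => //.
by rewrite setUC cardsU1 cards2 !inE negb_or wx wy xy.
Qed.

Section LowerBound.
Variables (k : nat) (n : 'I_k -> nat).
Notation V := (grid_vertex n).
Hypothesis n_gt0 : forall i, 0 < n i.
Hypothesis three_vertices : 2 < #|V|.

Definition coord_sum (v : V) : nat := \sum_(i < k) (v i : nat).

Lemma coord_sum_step u v : grid_adj u v ->
  coord_sum v = (coord_sum u).+1 \/ coord_sum u = (coord_sum v).+1.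
Proof.
case/existsP=> i /andP[uv /forall_inP same].
rewrite /coord_sum (bigD1 i) //= [\sum_(j < k) (u j : nat)](bigD1 i) //=.
under eq_bigr => j ji do rewrite -(eqP (same j ji)).
by case/orP: uv => /eqP <-; [left|right].
Qed.

(* A rainbow tree through the corners (0, ..., 0) and (n_1 - 1, ..., n_k - 1)
   crosses all the levels of coord_sum between them, with distinct colours. *)
Lemma grid_lower_bound m (c : {set V} -> 'I_m) :
  three_rainbow_coloring (@grid_adj k n) c -> \sum_(i < k) n i - k <= m.
Proof.
move=> rainbow3.
have top i : (n i).-1 < n i by have := n_gt0 i; lia.
pose z : V := [ffun i => Ordinal (n_gt0 i)].
pose t : V := [ffun i => Ordinal (top i)].
have sum_z : coord_sum z = 0 by rewrite /coord_sum big1 // => i _; rewrite ffunE.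
have sum_t : coord_sum t = \sum_(i < k) n i - k.
  by rewrite -sum_pred // /coord_sum; apply: eq_bigr => i _; rewrite ffunE.
case: (eqVneq z t) => [zt|zt]; first by rewrite -sum_t -zt sum_z.
have [S [S3 zS tS]] := three_set_with zt three_vertices.
have [F [/andP[/andP[edgesF connF] _] rainF spanS]] := rainbow3 S S3.
have zF : z \in span_vertices F by rewrite (subsetP spanS).
have tF : t \in span_vertices F by rewrite (subsetP spanS).
have zt_conn := forall_inP (forall_inP connF z zF) t tF.
have := connecting_edges coord_sum_step edgesF zt_conn.
by rewrite sum_z sum_t subn0 => /leq_trans; apply; exact: rainbow_card rainF.
Qed.

End LowerBound.

Lemma card_grid k (n : 'I_k -> nat) : #|grid_vertex n| = \prod_(i < k) n i.
Proof.
rewrite card_dep_ffun foldrE big_map big_enum /=.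
by apply: eq_bigr => i _; rewrite card_ord.
Qed.

Theorem corollary1 (k : nat) (n : 'I_k -> nat) :
  2 <= k -> (forall i, 3 <= n i) ->
  rx3_eq (@grid_adj k n) (\sum_(i < k) n i - k).
Proof.
move=> k_ge2 n_ge3; have n_gt0 i : 0 < n i by have := n_ge3 i; lia.
pose i0 : 'I_k := Ordinal (ltnW k_ge2).
have colours_gt0 : 0 < \sum_(i < k) n i - k.
  by rewrite -sum_pred // (bigD1 i0) //=; have := n_ge3 i0; lia.
have three_vertices : 2 < #|grid_vertex n|.
  rewrite card_grid (bigD1 i0) //=; apply: leq_trans (n_ge3 i0) _.
  by rewrite leq_pmulr // prodn_gt0.
split; first by exists (grid_colour n_gt0 colours_gt0); exact: grid_colour_3rainbow.
by move=> m c; apply: grid_lower_bound.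
Qed.
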